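(* For every (nonempty) composition $\alpha$, the fundamental quasi-symmetric function $L_\alpha$ is irreducible both in $\mathrm{QSym}$ and in $K=\mathbb Z[[x_1,x_2,\dots]]$ (power series of bounded degree).
   Context: For a composition $\alpha=(\alpha_1,\dots,\alpha_k)$ of $n$ (positive integers), $D(\alpha)=\{\alpha_1,\dots,\alpha_1+\dots+\alpha_{k-1}\}\subseteq[n-1]$, $M_\beta=\sum_{i_1<\dots<i_l}x_{i_1}^{\beta_1}\cdots x_{i_l}^{\beta_l}$, and $L_\alpha=\sum_{|\beta|=n,\,D(\beta)\subseteq D(\alpha)}M_\beta$. $\mathrm{QSym}\subseteq K$ is the ring of quasi-symmetric functions (bounded-degree series whose coefficient of $x_{i_1}^{a_1}\cdots x_{i_k}^{a_k}$ depends only on $(a_1,\dots,a_k)$ for $i_1<\dots<i_k$). The units of $K$ and $\mathrm{QSym}$ are $\pm1$. *)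

From mathcomp Require Import all_boot all_order all_algebra.
Set Implicit Arguments. Unset Strict Implicit. Unset Printing Implicit Defensive.
Import GRing.Theory Num.Theory.
Local Open Scope ring_scope.

(* A monomial x_1^{s_0} x_2^{s_1} ... is encoded by its exponent vector
   s : seq nat (entry i = exponent of x_{i+1}); trailing zeros are irrelevant. *)
Definition series := seq nat -> int.

Definition inK (f : series) : Prop :=
  (forall s, f (rcons s 0%N) = f s) /\
  (exists n : nat, forall s, (n < sumn s)%N -> f s = 0).

Fixpoint divs (s : seq nat) : seq (seq nat) :=
  match s with
  | [::] => [:: [::]]
  | e :: s' => [seq i :: t | i <- iota 0 e.+1, t <- divs s']
  end.

Definition subv (s t : seq nat) : seq nat := [seq (x.1 - x.2)%N | x <- zip s t].

Definition mulS (f g : series) : series :=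
  fun s => \sum_(t <- divs s) f t * g (subv s t).

Definition oneS : series := fun s => if sumn s == 0%N then 1 else 0.

(* quasi-symmetric: the coefficient of x_{i1}^{a1}...x_{ik}^{ak}
   (i1<...<ik, a_j>0) depends only on (a1,...,ak), i.e. equals the coefficient
   of x_1^{a1}...x_k^{ak}. *)
Definition compress (s : seq nat) : seq nat := [seq e <- s | e != 0%N].
Definition qsym (f : series) : Prop := forall s, f s = f (compress s).

Definition inQSym (f : series) : Prop := inK f /\ qsym f.

Definition unitIn (P : series -> Prop) (f : series) : Prop :=
  exists u, P u /\ forall s, mulS f u s = oneS s.

Definition irredIn (P : series -> Prop) (f : series) : Prop :=
  [/\ P f, (exists s, f s != 0), ~ unitIn P f &
      forall g h, P g -> P h -> (forall s, mulS g h s = f s) ->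
        unitIn P g \/ unitIn P h].

Definition composition (a : seq nat) : bool := all (fun x => 0 < x)%N a.

Definition Dset (a : seq nat) : seq nat :=
  [seq sumn (take i a) | i <- iota 1 (size a).-1].

(* M_b = sum_{i1<...<il} x_{i1}^{b1}...x_{il}^{bl}: coefficient at s is 1 iff
   the nonzero exponents of s, in order, are exactly b. *)
Definition Mq (b : seq nat) : series :=
  fun s => if compress s == b then 1 else 0.

(* L_a = sum_{|b| = |a|, D(b) ⊆ D(a)} M_b, where b ranges over compositions.
   Since the M_b have disjoint supports (the monomials with compress s = b),
   the coefficient of L_a at s is M_{compress s}(s) = 1 if compress s is such
   a b, and 0 otherwise. *)
Definition Lq (a : seq nat) : series :=
  fun s => let b := compress s in
    if (sumn b == sumn a) && all (fun x => x \in Dset a) (Dset b)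
    then Mq b s else 0.

From mathcomp Require Import all_boot all_order all_algebra algC cyclotomic.
From mathcomp Require Import boolp zify.
Set Implicit Arguments. Unset Strict Implicit. Unset Printing Implicit Defensive.
Import GRing.Theory Num.Theory.
Local Open Scope ring_scope.

(* L_alpha is homogeneous of degree n = |alpha| with coefficient 1 at x_1^n,
   and K is a graded domain, so in a factorization L_alpha = g h both factors
   are homogeneous, of degrees d + e = n; if d = 0 then g is a constant
   dividing 1, i.e. g = +-1.  Suppose d, e > 0 and let z be a primitive
   (n+1)-st root of unity.  Every L_beta with beta nonempty and |beta| <= n
   vanishes at U = (1, z, ..., z^n), hence L_alpha(X, U) = X^n; comparing
   degrees, g(X, U) and h(X, U) are monomials of positive degree, so
   g(0, U) = h(0, U) = 0.  Consequently g(0, 1 + t, z, ..., z^n) and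
   h(0, 1 + t, z, ..., z^n) vanish at t = 0 and their product
   L_alpha(0, 1 + t, z, ..., z^n) = L_alpha(1 + t, z, ..., z^n) has no
   linear term in t; but the values of
   the L_beta at (z, ..., z^n) show that this linear coefficient is the last
   part of alpha. *)

Definition slice (g : series) (i : nat) : series := fun s => g (i :: s).

Lemma mulS_nil g h : mulS g h [::] = g [::] * h [::].
Proof. by rewrite /mulS /= big_seq1. Qed.

Lemma mulS_cons g h i s :
  mulS g h (i :: s) = \sum_(j < i.+1) mulS (slice g j) (slice h (i - j)%N) s.
Proof.
rewrite /mulS {1}/divs -/divs big_allpairs_dep -(subn0 i.+1) -/(index_iota 0 i.+1).
by rewrite big_mkord subn0.
Qed.

Lemma divs_sumn s t : t \in divs s -> (sumn t + sumn (subv s t))%N = sumn s.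
Proof.
elim: s t => [|e s IH] t; first by rewrite inE => /eqP ->.
rewrite {1}/divs -/divs => /allpairsPdep[j [u [+ /IH + ->]]] /=.
by rewrite mem_iota add0n ltnS => je <-; rewrite addnACA subnKC.
Qed.

Definition deg_le (B : nat) (g : series) := forall s, (B < sumn s)%N -> g s = 0.

Lemma deg_le_slice B g i : deg_le B g -> deg_le (B - i) (slice g i).
Proof. by move=> gB s hs; apply: gB => /=; lia. Qed.

Lemma deg_le_mono B B' g : (B <= B')%N -> deg_le B g -> deg_le B' g.
Proof. by move=> le gB s hs; apply: gB; lia. Qed.

Section Evaluation.
Variable R : comNzRingType.

(* [evalS D g ws] substitutes [ws] for the first [size ws] variables and 0 for
   the others, keeping only exponents at most [D] in each variable. *)
Fixpoint evalS (D : nat) (g : series) (ws : seq R) : R :=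
  match ws with
  | [::] => (g [::])%:~R
  | w :: ws' => \sum_(i < D.+1) evalS D (slice g i) ws' * w ^+ i
  end.

Lemma eq_evalS D g g' ws : g =1 g' -> evalS D g ws = evalS D g' ws.
Proof.
elim: ws g g' => [|w ws IH] g g' e /=; first by rewrite e.
by apply: eq_bigr => i _; rewrite (IH _ (slice g' i)) // => s; apply: e.
Qed.

Lemma evalS_eq0 D g ws :
  (forall s, size s = size ws -> g s = 0) -> evalS D g ws = 0.
Proof.
elim: ws g => [|w ws IH] g g0 /=; first by rewrite g0.
by apply: big1 => i _; rewrite IH ?mul0r // => s hs; apply: g0; rewrite /= hs.
Qed.

Lemma evalS_sum D m (F : nat -> series) ws :
  evalS D (fun s => \sum_(j < m) F j s) ws = \sum_(j < m) evalS D (F j) ws.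
Proof.
elim: ws F => [|w ws IH] F /=; first by rewrite (big_morph _ (@intrD R) (mulr0z 1)).
under eq_bigr do rewrite (IH (fun j => slice (F j) _)) mulr_suml.
exact: exchange_big.
Qed.

Lemma evalS_slice_big D B g ws i : deg_le B g -> (B < i)%N ->
  evalS D (slice g i) ws = 0.
Proof. by move=> gB Bi; apply: evalS_eq0 => s _; apply: gB => /=; lia. Qed.

Definition evalS_poly D (g : series) (ws : seq R) : {poly R} :=
  \poly_(i < D.+1) evalS D (slice g i) ws.

Lemma horner_evalS_poly D g w ws : (evalS_poly D g ws).[w] = evalS D g (w :: ws).
Proof. exact: horner_poly. Qed.

Lemma size_evalS_poly B D g ws : deg_le B g -> (size (evalS_poly D g ws) <= B.+1)%N.
Proof.
move=> gB; apply/leq_sizeP => j Bj; rewrite coef_poly.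
by case: ifP => // _; apply: evalS_slice_big gB _.
Qed.

Lemma evalS_mulS D B1 B2 g h ws : deg_le B1 g -> deg_le B2 h ->
  (B1 + B2 <= D)%N -> evalS D (mulS g h) ws = evalS D g ws * evalS D h ws.
Proof.
elim: ws g h B1 B2 => [|w ws IH] g h B1 B2 gB hB BD.
  by rewrite /= mulS_nil intrM.
have size_gh : (size (evalS_poly D g ws * evalS_poly D h ws)%R <= D.+1)%N.
  apply: leq_trans (size_polyMleq _ _) _.
  by have := size_evalS_poly D ws gB; have := size_evalS_poly D ws hB; lia.
rewrite -[evalS D g _]horner_evalS_poly -[evalS D h _]horner_evalS_poly -hornerM.
rewrite (horner_coef_wide _ size_gh) /=.
apply: eq_bigr => i _; congr (_ * _).
rewrite coefM (eq_evalS _ _ (fun s => mulS_cons g h i s)).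
rewrite (evalS_sum _ _ (fun j => mulS (slice g j) (slice h (i - j)))).
apply: eq_bigr => j _; rewrite !coef_poly !ifT; last 2 first.
- by apply: leq_ltn_trans (leq_subr _ _) (ltn_ord i).
- by apply: leq_ltn_trans (ltn_ord i); rewrite -ltnS.
by apply: (IH _ _ (B1 - j)%N (B2 - (i - j))%N); try exact: deg_le_slice; lia.
Qed.

End Evaluation.

Lemma evalS_map (R S : comNzRingType) (f : {rmorphism R -> S}) D g ws :
  evalS D g (map f ws) = f (evalS D g ws).
Proof.
elim: ws g => [|w ws IH] g /=; first by rewrite rmorph_int.
by rewrite rmorph_sum; apply: eq_bigr => i _; rewrite IH rmorphM rmorphXn.
Qed.

Lemma evalS_cons0 (R : comNzRingType) D g (ws : seq R) :
  evalS D g (0 :: ws) = evalS D (slice g 0) ws.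
Proof.
rewrite /= big_ord_recl expr0 mulr1 big1 ?addr0 // => i _.
by rewrite expr0n mulr0.
Qed.

Lemma exists_nonroot (R : numDomainType) (p : {poly R}) :
  p != 0 -> exists x, p.[x] != 0.
Proof.
move=> p0; pose xs := [seq i%:R : R | i <- iota 0 (size p)].
have uniq_xs : uniq xs.
  by rewrite map_inj_uniq ?iota_uniq // => i j /eqP; rewrite eqr_nat => /eqP.
suff /allPn[x _ px] : ~~ all (root p) xs by exists x.
apply/negP => /(max_poly_roots p0)/(_ uniq_xs).
by rewrite size_map size_iota ltnn.
Qed.

Lemma evalS_neq0 (R : numDomainType) D g h s1 s2 :
  deg_le D g -> deg_le D h -> size s1 = size s2 -> g s1 != 0 -> h s2 != 0 ->
  exists ws : seq R, evalS D g ws * evalS D h ws != 0.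
Proof.
elim: s1 s2 g h => [|i1 t1 IH] [|i2 t2] // g h gD hD sz g1 h2.
  by exists [::]; rewrite /= -intrM intr_eq0 mulf_neq0.
move: sz => [sz].
have exp_le f i t : deg_le D f -> f (i :: t) != 0 -> (i <= D)%N.
  by move=> fD; apply: contraNT; rewrite -ltnNge => Di; rewrite fD //=; lia.
have [ws ws_neq0] := IH t2 (slice g i1) (slice h i2)
  (deg_le_mono (leq_subr _ _) (deg_le_slice (i:=i1) gD))
  (deg_le_mono (leq_subr _ _) (deg_le_slice (i:=i2) hD)) sz g1 h2.
have P_neq0 f i : (i <= D)%N -> evalS D (slice f i) ws != 0 -> evalS_poly D f ws != 0.
  move=> iD; apply: contraNneq => /(congr1 (coefp i)).
  by rewrite /= coef0 coef_poly ltnS iD => ->.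
rewrite mulf_eq0 negb_or in ws_neq0; case/andP: ws_neq0 => gws hws.
have [x] := exists_nonroot (mulf_neq0 (P_neq0 _ _ (exp_le _ _ _ gD g1) gws)
                                      (P_neq0 _ _ (exp_le _ _ _ hD h2) hws)).
by rewrite hornerM !horner_evalS_poly => px; exists (x :: ws).
Qed.

Definition rcons0_inv (g : series) := forall s, g (rcons s 0%N) = g s.

Lemma rcons0_inv_pad g s k : rcons0_inv g -> g (s ++ nseq k 0%N) = g s.
Proof.
move=> gr; elim: k => [|k IH]; first by rewrite cats0.
by rewrite -addn1 nseqD catA cats1 gr.
Qed.

(* K is a domain: pad to a common number of variables and evaluate at an
   integer point where neither factor vanishes. *)
Lemma mulS_neq0 g h s1 s2 : inK g -> inK h -> g s1 != 0 -> h s2 != 0 ->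
  exists s, mulS g h s != 0.
Proof.
move=> [gr [B1 gB]] [hr [B2 hB]] g1 h2.
pose pad s := s ++ nseq (maxn (size s1) (size s2) - size s)%N 0%N.
have size_pad s : (size s <= maxn (size s1) (size s2))%N ->
  size (pad s) = maxn (size s1) (size s2).
  by rewrite size_cat size_nseq; lia.
have g1' : g (pad s1) != 0 by rewrite rcons0_inv_pad.
have h2' : h (pad s2) != 0 by rewrite rcons0_inv_pad.
have [ws] := @evalS_neq0 int (B1 + B2) g h (pad s1) (pad s2)
  (deg_le_mono (leq_addr _ _) gB) (deg_le_mono (leq_addl _ _) hB)
  (etrans (size_pad _ (leq_maxl _ _)) (esym (size_pad _ (leq_maxr _ _)))) g1' h2'.
rewrite -(evalS_mulS _ gB hB) // => gh_neq0.
apply/not_existsP => gh0; move: gh_neq0; rewrite evalS_eq0 ?eqxx // => s _.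
by apply/eqP/negPn/negP => /gh0.
Qed.

Definition hcomp (j : nat) (g : series) : series :=
  fun s => if sumn s == j then g s else 0.

Definition homogeneous (n : nat) (g : series) := forall s, g s != 0 -> sumn s = n.

Lemma homogeneous_deg_le m f : homogeneous m f -> deg_le m f.
Proof. by move=> fm s ms; apply/eqP; apply: contraTT ms => /fm ->; rewrite ltnn. Qed.

Lemma inK_hcomp j g : inK g -> inK (hcomp j g).
Proof.
move=> [gr [B gB]]; split=> [s|].
  by rewrite /hcomp -cats1 sumn_cat /= !addn0 cats1 gr.
by exists B => s hs; rewrite /hcomp gB // if_same.
Qed.

Lemma hcomp_neq0 j g s : sumn s = j -> g s != 0 -> hcomp j g s != 0.
Proof. by move=> <-; rewrite /hcomp eqxx. Qed.

Lemma homogeneous_mulS_hcomp a b g h :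
  homogeneous (a + b) (mulS (hcomp a g) (hcomp b h)).
Proof.
move=> s; apply: contraNeq => sab; rewrite /mulS big_seq big1 // => t /divs_sumn tu.
rewrite /hcomp; case: eqP => [ta|_]; last by rewrite mul0r.
by case: eqP => [tb|_]; [lia | rewrite mulr0].
Qed.

Lemma mulS_hcomp a b g h s :
  (forall t u, g t != 0 -> h u != 0 -> (sumn t + sumn u = a + b)%N -> sumn t = a) ->
  sumn s = (a + b)%N -> mulS g h s = mulS (hcomp a g) (hcomp b h) s.
Proof.
move=> split_ab sab; rewrite /mulS; apply: eq_big_seq => t /divs_sumn.
rewrite sab /hcomp => tu.
have [gt0|gt_neq0] := eqVneq (g t) 0; first by rewrite gt0 mul0r if_same mul0r.
have [hu0|hu_neq0] := eqVneq (h (subv s t)) 0; first by rewrite hu0 if_same !mulr0.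
have ta := split_ab _ _ gt_neq0 hu_neq0 tu.
have ub : sumn (subv s t) = b by lia.
by rewrite ta ub !eqxx.
Qed.

Definition has_degree (g : series) (j : nat) :=
  exists2 s : seq nat, sumn s = j & g s != 0.

Lemma has_degree_sumn g s : g s != 0 -> `[< has_degree g (sumn s) >].
Proof. by move=> gs; apply/asboolP; exists s. Qed.

Lemma lowest_degree g s0 : g s0 != 0 ->
  exists a, has_degree g a /\ forall t, g t != 0 -> (a <= sumn t)%N.
Proof.
move=> gs0; have exP : exists j, `[< has_degree g j >].
  by exists (sumn s0); apply: has_degree_sumn.
case: (ex_minnP exP) => a /asboolP ga min_a; exists a; split=> // t gt.
exact/min_a/has_degree_sumn.
Qed.

Lemma highest_degree g B s0 : deg_le B g -> g s0 != 0 ->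
  exists A, has_degree g A /\ forall t, g t != 0 -> (sumn t <= A)%N.
Proof.
move=> gB gs0; have exP : exists j, `[< has_degree g j >].
  by exists (sumn s0); apply: has_degree_sumn.
have le_B j : `[< has_degree g j >] -> (j <= B)%N.
  by case/asboolP=> s <-; apply: contraTT; rewrite -ltnNge => /gB ->.
case: (ex_maxnP exP le_B) => A /asboolP gA max_A; exists A; split=> // t gt.
exact/max_A/has_degree_sumn.
Qed.

Lemma homogeneous_factors f g h n : inK g -> inK h -> mulS g h =1 f ->
  homogeneous n f -> (exists s, f s != 0) ->
  exists d e, [/\ (d + e)%N = n, homogeneous d g & homogeneous e h].
Proof.
move=> gK hK fgh fn [s0 fs0].
have [t _] : exists2 t, t \in divs s0 & g t * h (subv s0 t) != 0.
  apply/hasP; apply: contraNT fs0 => /hasPn gh0.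
  by rewrite -fgh /mulS big_seq big1 // => t /gh0 /negPn /eqP.
rewrite mulf_eq0 negb_or => /andP[gt ht].
have [[_ [B1 gB]] [_ [B2 hB]]] := (gK, hK).
(* Components of extreme degrees multiply without interference, and their
   product is nonzero since K is a domain. *)
have degree_sum a b : has_degree g a -> has_degree h b ->
    (forall t u, g t != 0 -> h u != 0 ->
       (sumn t + sumn u = a + b)%N -> sumn t = a) ->
    (a + b)%N = n.
  move=> [sa sa_a ga] [sb sb_b hb] split_ab.
  have [s gh_s] := mulS_neq0 (inK_hcomp a gK) (inK_hcomp b hK)
    (hcomp_neq0 sa_a ga) (hcomp_neq0 sb_b hb).
  have sab := homogeneous_mulS_hcomp gh_s.
  by rewrite -mulS_hcomp // fgh in gh_s; rewrite -sab fn.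
have [a [ga low_g]] := lowest_degree gt.
have [b [hb low_h]] := lowest_degree ht.
have [A [gA high_g]] := highest_degree gB gt.
have [B [hB' high_h]] := highest_degree hB ht.
have ab : (a + b)%N = n by apply: degree_sum ga hb _ => u v /low_g + /low_h; lia.
have AB : (A + B)%N = n by apply: degree_sum gA hB' _ => u v /high_g + /high_h; lia.
have aA : (a <= A)%N by case: ga => sa <- /high_g.
have bB : (b <= B)%N by case: hb => sb <- /high_h.
exists a, b; split=> // s fs.
- by have := low_g _ fs; have := high_g _ fs; lia.
- by have := low_h _ fs; have := high_h _ fs; lia.
Qed.

Lemma sumn_compress s : sumn (compress s) = sumn s.
Proof. by elim: s => //= -[|x] s; rewrite /compress /= => ->. Qed.

Lemma composition_compress s : composition (compress s).
Proof. by elim: s => //= -[|x] s; rewrite /compress /=. Qed.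

Lemma compress_consS i s : (0 < i)%N -> compress (i :: s) = i :: compress s.
Proof. by case: i. Qed.

Lemma sumn_gt0 a : composition a -> a != [::] -> (0 < sumn a)%N.
Proof. by case: a => //= x a /andP[x0 _] _; rewrite addn_gt0 x0. Qed.

Lemma sumn_take_gt0 a m : composition a -> (0 < m <= size a)%N ->
  (0 < sumn (take m a))%N.
Proof. by case: a m => [|x a] [|m] //= /andP[x0 _] _; rewrite addn_gt0 x0. Qed.

Lemma composition_drop a m : composition a -> composition (drop m a).
Proof. by rewrite /composition -{1}(cat_take_drop m a) all_cat => /andP[]. Qed.

Lemma drop_neq_nil (T : eqType) (a : seq T) m : (m < size a)%N -> drop m a != [::].
Proof. by rewrite -size_eq0 size_drop -lt0n subn_gt0. Qed.

(* [coarse a b] decides whether the composition [b] is obtained from [a] by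
   merging adjacent parts. *)
Fixpoint coarse (a b : seq nat) : bool :=
  match a, b with
  | [::], _ => b == [::]
  | _ :: _, [::] => false
  | x :: a', y :: b' =>
      if x == y then coarse a' b' else (x < y)%N && coarse a' ((y - x)%N :: b')
  end.

Lemma Dset_cons y b :
  Dset (y :: b) = if b is [::] then [::] else y :: map (addn y) (Dset b).
Proof.
case: b => [//|z b]; rewrite /Dset /= addn0 (iotaDl 1 1) -!map_comp.
by congr (_ :: _); apply: eq_map.
Qed.

Lemma Dset_gt0 b x : composition b -> x \in Dset b -> (0 < x)%N.
Proof.
elim: b x => [//|y b IH] x /= /andP[y0 cb]; rewrite Dset_cons.
case: b IH cb => [//|z b] IH cb; rewrite inE => /orP[/eqP -> //|].
by case/mapP => u _ ->; rewrite addn_gt0 y0.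
Qed.

Lemma all_mem_addn x L M : all (fun z => 0 < z)%N M ->
  all (mem (x :: map (addn x) L)) (map (addn x) M) = all (mem L) M.
Proof.
elim: M => //= m M IH /andP[m0 M0]; rewrite IH // inE (mem_map (@addnI x)).
by have -> : (x + m == x)%N = false by lia.
Qed.

Lemma coarse_Dset a b : composition a -> composition b ->
  (sumn b == sumn a) && all (mem (Dset a)) (Dset b) = coarse a b.
Proof.
elim: a b => [|x a IH] [|y b] //=.
- by move=> _ /andP[y0 _]; have -> : (y + sumn b == 0)%N = false by lia.
- by move=> /andP[x0 _] _; have -> : (0 == x + sumn a)%N = false by lia.
case/andP=> x0 ca /andP[y0 cb]; rewrite (Dset_cons x a) (Dset_cons y b).
case: (ltngtP x y) => [xy|yx|<-].
- have cb' : composition ((y - x)%N :: b) by rewrite /= cb andbT subn_gt0.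
  rewrite -IH // (Dset_cons (y - x) b) /=.
  have -> : (y + sumn b == x + sumn a)%N = (y - x + sumn b == sumn a)%N.
    by apply/eqP/eqP; lia.
  case: b cb cb' => [//|z b] cb cb'; case: a ca {IH} => [|w a] ca; first by rewrite andbF.
  have -> : y :: map (addn y) (Dset (z :: b)) =
      map (addn x) ((y - x)%N :: map (addn (y - x)) (Dset (z :: b))).
    rewrite /= -map_comp; congr (_ :: _); first by lia.
    by apply: eq_map => u /=; lia.
  rewrite all_mem_addn //= subn_gt0 xy all_map.
  by apply/allP => u /(Dset_gt0 cb) /=; lia.
- case: b cb => [|z b] cb; first by rewrite /= andbT; apply/negbTE/eqP; lia.
  case: a ca {IH} => [|w a] ca; first by rewrite /= andbF.
  rewrite /= inE; have -> : (y == x) = false by apply/eqP; lia.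
  have -> : (y \in map (addn x) (Dset (w :: a))) = false.
    by apply/negbTE/negP => /mapP[u _]; lia.
  by rewrite andbF.
- rewrite -IH // eqn_add2l.
  case: b cb => [|z b] cb; first by rewrite /= andbT.
  case: a ca {IH} => [|w a] ca.
    rewrite /= andbF; apply/esym/negbTE/negP => /andP[/eqP e _].
    by move: cb => /= /andP[z0 _]; lia.
  rewrite -/(map (addn x) (x :: _)) /= mem_head /=.
  by rewrite all_mem_addn //; apply/allP => u; apply: Dset_gt0 cb.
Qed.

Lemma Lq_coarse a s : composition a -> Lq a s = (coarse a (compress s))%:R.
Proof.
move=> ca; rewrite /Lq /Mq eqxx coarse_Dset ?composition_compress //.
by case: coarse.
Qed.

Lemma coarse_cons a i c : composition a -> (0 < i)%N ->
  (coarse a (i :: c))%:R =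
  \sum_(m < (size a).+1)
    if i == sumn (take m a) then (coarse (drop m a) c)%:R else 0 :> int.
Proof.
elim: a i => [|x a IH] i ca i0; first by rewrite big_ord1 /=; case: eqP i0 => // ->.
case/andP: ca => x0 ca; rewrite big_ord_recl /= [i == 0%N]eqn0Ngt i0 add0r.
case: (ltngtP x i) => [xi|ix|<-].
- rewrite (IH (i - x)%N ca) ?subn_gt0 //; apply: eq_bigr => m _ /=.
  have -> : (i == x + sumn (take m a))%N = (i - x == sumn (take m a))%N.
    by apply/eqP/eqP; lia.
  by [].
- by rewrite big1 // => m _; have -> : (i == x + sumn (take m a))%N = false by lia.
- rewrite big_ord_recl /= take0 drop0 addn0 eqxx big1 ?addr0 // => m _.
  have := @sumn_take_gt0 a m.+1 ca; rewrite ltn_ord /= => /(_ isT) m0.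
  by have -> : (x == x + sumn (take m.+1 a))%N = false by lia.
Qed.

Lemma Lq_cons a i s : composition a -> Lq a (i :: s) =
  \sum_(m < (size a).+1) if i == sumn (take m a) then Lq (drop m a) s else 0.
Proof.
move=> ca; case: i => [|i].
  rewrite big_ord_recl /= take0 drop0 big1 ?addr0 ?Lq_coarse // => m _.
  by have := @sumn_take_gt0 a m.+1 ca; rewrite ltn_ord => /(_ isT); case: sumn.
rewrite Lq_coarse // compress_consS // coarse_cons //.
by apply: eq_bigr => m _; rewrite Lq_coarse // composition_drop.
Qed.

Lemma rcons0_inv_Lq a : rcons0_inv (Lq a).
Proof. by move=> s; rewrite /Lq /Mq /compress filter_rcons. Qed.

Lemma homogeneous_Lq a : composition a -> homogeneous (sumn a) (Lq a).
Proof.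
move=> ca s; rewrite Lq_coarse // -sumn_compress.
by case: coarse (coarse_Dset ca (composition_compress s)) => // /andP[/eqP ->].
Qed.

Lemma Lq_nil a : composition a -> a != [::] -> Lq a [::] = 0.
Proof. by move=> ca; rewrite Lq_coarse //; case: a {ca}. Qed.

Lemma Lq_single a : (0 < sumn a)%N -> Lq a [:: sumn a] = 1.
Proof. by rewrite /Lq /Mq /compress /=; case: sumn => //= n _; rewrite addn0 !eqxx. Qed.

Lemma sumn_take_le a m : (sumn (take m a) <= sumn a)%N.
Proof. by rewrite -{2}(cat_take_drop m a) sumn_cat leq_addr. Qed.

Lemma sumn_drop_le a m : (sumn (drop m a) <= sumn a)%N.
Proof. by rewrite -{2}(cat_take_drop m a) sumn_cat leq_addl. Qed.

Section EvalL.
Variable R : comNzRingType.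

Fixpoint evalL (b : seq nat) (ws : seq R) : R :=
  match ws with
  | [::] => (b == [::])%:R
  | w :: ws' => \sum_(m < (size b).+1) w ^+ sumn (take m b) * evalL (drop m b) ws'
  end.

Lemma evalL_cons b w ws : evalL b (w :: ws) =
  \sum_(m < (size b).+1) w ^+ sumn (take m b) * evalL (drop m b) ws.
Proof. by []. Qed.

Lemma evalL_nil ws : evalL [::] ws = 1.
Proof. by elim: ws => //= w ws IH; rewrite big_ord1 expr0 mul1r IH. Qed.

Lemma evalS_Lq D a ws : composition a -> (sumn a <= D)%N ->
  evalS D (Lq a) ws = evalL a ws.
Proof.
elim: ws a => [|w ws IH] a ca aD /=; first by rewrite Lq_coarse //; case: a {ca aD}.
transitivity (\sum_(i < D.+1) \sum_(m < (size a).+1)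
    if i == sumn (take m a) :> nat then evalL (drop m a) ws * w ^+ i else 0).
  apply: eq_bigr => i _; rewrite (eq_evalS _ _ (fun s => Lq_cons i s ca)).
  rewrite (evalS_sum _ _
    (fun m s => if i == sumn (take m a) :> nat then Lq (drop m a) s else 0)).
  rewrite mulr_suml; apply: eq_bigr => m _; case: eqP => _; last first.
    by rewrite evalS_eq0 ?mul0r.
  by rewrite -IH ?composition_drop // (leq_trans (sumn_drop_le a m) aD).
rewrite exchange_big; apply: eq_bigr => m _; rewrite -big_mkcond.
rewrite (big_ord1_eq _ (fun i => evalL (drop m a) ws * w ^+ i)) ltnS.
by rewrite (leq_trans (sumn_take_le a m) aD) mulrC.
Qed.

Lemma evalL_scale c b ws :
  evalL b [seq c * w | w <- ws] = c ^+ sumn b * evalL b ws.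
Proof.
elim: ws b => [|w ws IH] b /=; first by case: b => [|x b]; rewrite ?expr0 ?mul1r ?mulr0.
rewrite mulr_sumr; apply: eq_bigr => m _.
rewrite IH exprMn mulrCA !mulrA -exprD -mulrA addnC -sumn_cat cat_take_drop.
by rewrite mulrA.
Qed.

Lemma evalL_cons1 b ws : b != [::] ->
  evalL b (1 :: ws) = evalL b ws + evalL (behead b) (1 :: ws).
Proof.
case: b => [//|x b] _ /=; rewrite big_ord_recl /= expr1n mul1r.
by congr (_ + _); apply: eq_bigr => m _; rewrite !expr1n.
Qed.

End EvalL.

Lemma evalL_map (R S : comNzRingType) (f : {rmorphism R -> S}) b ws :
  evalL b (map f ws) = f (evalL b ws).
Proof.
elim: ws b => [|w ws IH] b /=; first by rewrite rmorph_nat.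
by rewrite rmorph_sum; apply: eq_bigr => m _; rewrite IH rmorphM rmorphXn.
Qed.

Lemma trig_mx_expr_eq1 (F : fieldType) n (A : 'M[F]_n.+1) L :
  is_trig_mx A -> injective (fun i => A i i) -> (forall i, A i i ^+ L = 1) ->
  A ^+ L = 1.
Proof.
move=> trigA inj_diag diagL.
have : char_poly A %| 'X^L - 1.
  rewrite char_poly_trig // -(big_map (fun i => A i i) xpredT (fun x => 'X - x%:P)).
  apply: uniq_roots_dvdp; last by rewrite uniq_rootsE map_inj_uniq ?index_enum_uniq.
  by apply/allP => _ /mapP[i _ ->]; rewrite /root !hornerE diagL subrr.
case/dvdpP=> q /(congr1 (horner_mx A)); rewrite rmorphM /= Cayley_Hamilton mulr0.
by rewrite rmorphB rmorphXn rmorph1 /= horner_mx_X => /eqP; rewrite subr_eq0 => /eqP.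
Qed.

Lemma sumn_drop_lt b i j : composition b -> (i < j <= size b)%N ->
  (sumn (drop j b) < sumn (drop i b))%N.
Proof.
move=> cb /andP[ij jb].
rewrite -[drop i b](cat_take_drop (j - i)) drop_drop subnK ?(ltnW ij) // sumn_cat.
rewrite -[X in (X < _)%N]add0n ltn_add2r sumn_take_gt0 ?composition_drop // size_drop.
by rewrite subn_gt0 ij leq_sub2r.
Qed.

Lemma big_ord_shift (V : nmodType) (F : nat -> V) i l : (i <= l)%N ->
  \sum_(m < (l - i).+1) F (m + i)%N = \sum_(k < l.+1 | (i <= k)%N) F k.
Proof.
move=> il; rewrite -(big_mkord (fun _ => true) (fun m => F (m + i)%N)) -subSn //.
rewrite -(big_addn 0 l.+1 i (fun _ => true) F) add0n big_geq_mkord.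
exact: eq_bigl.
Qed.

Section RootsOfUnity.
Variables (F : fieldType) (L : nat) (z : F).
Hypothesis z_prim : L.-primitive_root z.

Definition geom (N : nat) : seq F := [seq z ^+ i | i <- iota 0 N].

Lemma geomS N : geom N.+1 = 1 :: [seq z * w | w <- geom N].
Proof.
rewrite /geom /= expr0 (iotaDl 1 0) -!map_comp; congr (_ :: _).
by apply: eq_map => i /=; rewrite exprS.
Qed.

Lemma evalL_geomS b N : evalL b (geom N.+1) =
  \sum_(m < (size b).+1) z ^+ sumn (drop m b) * evalL (drop m b) (geom N).
Proof. by rewrite geomS /=; apply: eq_bigr => m _; rewrite expr1n mul1r evalL_scale. Qed.

(* The row of values of L_{drop j b} at (1, z, ..., z^(N-1)), j <= size b, is
   multiplied at each step N -> N+1 by a triangular matrix whose diagonal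
   entries z^(sumn (drop j b)) are distinct L-th roots of unity; that matrix
   has order dividing L, so the values at N = L are the values at N = 0. *)
Lemma evalL_geom_eq0 b : composition b -> b != [::] -> (sumn b < L)%N ->
  evalL b (geom L) = 0.
Proof.
move=> cb b_neq0 bL; set l := size b.
pose mu k := sumn (drop k b).
pose B : 'M[F]_l.+1 := \matrix_(k, j) if (j <= k)%N then z ^+ mu k else 0.
pose u N : 'rV[F]_l.+1 := \row_j evalL (drop j b) (geom N).
have uS N : u N.+1 = u N *m B.
  apply/rowP => j; rewrite !mxE evalL_geomS size_drop.
  under eq_bigr do rewrite drop_drop.
  rewrite (big_ord_shift (fun k => z ^+ mu k * evalL (drop k b) (geom N))); last first.
    by rewrite -ltnS.
  rewrite big_mkcond; apply: eq_bigr => k _; rewrite !mxE.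
  by case: leqP => _; rewrite ?mulr0 // mulrC.
have uN N : u N = u 0%N *m B ^+ N.
  by elim: N => [|N IH]; rewrite ?expr0 ?mulmx1 // uS IH exprSr -mulmxA.
have mu_lt k : (mu k < L)%N by apply: leq_ltn_trans (sumn_drop_le _ _) bL.
have mu_decr (i j : 'I_l.+1) : (i < j)%N -> (mu j < mu i)%N.
  by move=> ij; apply: sumn_drop_lt; rewrite // ij -ltnS ltn_ord.
have mu_inj (i j : 'I_l.+1) : mu i = mu j -> i = j.
  move=> e; apply/val_inj/eqP; rewrite eqn_leq.
  by apply/andP; split; rewrite leqNgt; apply/negP => /mu_decr; rewrite e ltnn.
have BL : B ^+ L = 1.
  apply: trig_mx_expr_eq1 => [|i j|i]; rewrite ?mxE ?leqnn.
  - by apply/is_trig_mxP => k j kj; rewrite mxE leqNgt kj.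
  - by move/eqP; rewrite (eq_prim_root_expr z_prim) !modn_small ?mu_lt // => /eqP/mu_inj.
  - by rewrite -exprM mulnC exprM (prim_expr_order z_prim) expr1n.
have := congr1 (fun v : 'rV_l.+1 => v 0 0) (uN L).
by rewrite BL mulmx1 !mxE drop0 /= (negbTE b_neq0).
Qed.

End RootsOfUnity.

Lemma mul_eqXn_coef0 (F : fieldType) (p q : {poly F}) n d e :
  p * q = 'X^n -> (size p <= d.+1)%N -> (size q <= e.+1)%N ->
  (d + e)%N = n -> (0 < d)%N -> p`_0 = 0.
Proof.
move=> pq sp sq de d0; apply/eqP; apply: contraT => p0.
have : coprimep 'X^n p.
  rewrite coprimep_sym coprimep_expr //.
  by have := coprimep_XsubC p 0; rewrite subr0 /root horner_coef0 p0.
move/Gauss_dvdpr => /(_ q); rewrite pq dvdpp => /esym Xn_dvd_q.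
have q_neq0 : q != 0.
  by apply: contra_eqN pq => /eqP->; rewrite mulr0 eq_sym monic_neq0 ?monicXn.
have := leq_trans (dvdp_leq q_neq0 Xn_dvd_q) sq; rewrite size_polyXn; lia.
Qed.

Lemma coef1_XaddC_exp (R : comNzRingType) j : (('X + 1 : {poly R}) ^+ j)`_1 = j%:R.
Proof.
elim: j => [|j IH]; first by rewrite expr0 coef1.
rewrite exprSr mulrDr mulr1 coefD coefMX /= IH -horner_coef0 horner_exp !hornerE.
by rewrite expr1n -add1n natrD.
Qed.

Lemma evalS_X (R : comNzRingType) D f (ws : seq R) :
  evalS D f ('X :: map polyC ws) = evalS_poly D f ws.
Proof.
rewrite /= /evalS_poly poly_def; apply: eq_bigr => i _.
by rewrite evalS_map mul_polyC.
Qed.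

Lemma evalL_cons0 (R : comNzRingType) b (ws : seq R) : composition b ->
  evalL b (0 :: ws) = evalL b ws.
Proof.
move=> cb; rewrite /= big_ord_recl take0 drop0 expr0 mul1r big1 ?addr0 // => m _.
by rewrite /= expr0n eqn0Ngt sumn_take_gt0 ?mul0r //= ltn_ord.
Qed.

Lemma coef1_evalL_XaddC (R : comNzRingType) b (ws : seq R) :
  (evalL b (('X + 1) :: map polyC ws))`_1 =
  \sum_(m < (size b).+1) (sumn (take m b))%:R * evalL (drop m b) ws.
Proof.
rewrite /= coef_sum; apply: eq_bigr => m _.
by rewrite evalL_map coefMC coef1_XaddC_exp.
Qed.

Section NoProperFactorization.
Variables (a : seq nat) (g h : series) (d e : nat) (z : algC).
Hypotheses (ca : composition a) (a_neq0 : a != [::]).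
Hypotheses (gd : homogeneous d g) (he : homogeneous e h).
Hypotheses (de : (d + e)%N = sumn a) (d_gt0 : (0 < d)%N) (e_gt0 : (0 < e)%N).
Hypothesis gh : mulS g h =1 Lq a.
Hypothesis z_prim : (sumn a).+1.-primitive_root z.

Local Notation n := (sumn a).
Local Notation U := (geom z n.+1).
Local Notation V := [seq z * w | w <- geom z n].

Lemma size_a_gt0 : (0 < size a)%N.
Proof. by rewrite lt0n size_eq0. Qed.

Lemma evalL_drop_U m : (m < size a)%N -> evalL (drop m a) U = 0.
Proof.
move=> ma; apply: (evalL_geom_eq0 z_prim) (drop_neq_nil ma) _.
  exact: composition_drop.
by rewrite ltnS sumn_drop_le.
Qed.

Lemma evalL_drop_V m : (m < size a)%N -> evalL (drop m a) V = - (m.+1 == size a)%:R.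
Proof.
move=> ma; have := evalL_cons1 V (drop_neq_nil ma).
rewrite -geomS evalL_drop_U // -drop1 drop_drop add1n => /esym/eqP.
rewrite addr_eq0 => /eqP ->; case: eqP => [->|ma']; first by rewrite drop_size evalL_nil.
by rewrite evalL_drop_U ?oppr0 //; lia.
Qed.

Lemma evalS_gh (R : comNzRingType) (ws : seq R) :
  evalS n g ws * evalS n h ws = evalL a ws.
Proof.
rewrite -(evalS_mulS _ (homogeneous_deg_le gd) (homogeneous_deg_le he)) ?de //.
by rewrite (eq_evalS _ _ gh) evalS_Lq.
Qed.

Lemma evalS_slice0_U : evalS n (slice g 0) U = 0 /\ evalS n (slice h 0) U = 0.
Proof.
have coef0P f : (evalS_poly n f U)`_0 = evalS n (slice f 0) U by rewrite coef_poly.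
have PgPh : evalS_poly n g U * evalS_poly n h U = 'X^n.
  rewrite -!evalS_X evalS_gh evalL_cons big_ord_recr take_size drop_size evalL_nil mulr1.
  rewrite big1 => [|m _]; first by rewrite [LHS]/= add0r.
  by rewrite evalL_map evalL_drop_U ?rmorph0 ?mulr0 /=.
have [sizeg sizeh] := (size_evalS_poly n U (homogeneous_deg_le gd),
                       size_evalS_poly n U (homogeneous_deg_le he)).
rewrite -!coef0P; split; first exact: mul_eqXn_coef0 PgPh sizeg sizeh de d_gt0.
apply: mul_eqXn_coef0 sizeh sizeg _ e_gt0; first by rewrite mulrC; apply: PgPh.
by rewrite addnC.
Qed.

Local Notation W := (('X + 1) :: map polyC V).

Lemma coef1_evalL_W : (evalL a W)`_1 = (sumn (drop (size a).-1 a))%:R.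
Proof.
rewrite coef1_evalL_XaddC big_ord_recr take_size drop_size evalL_nil mulr1.
rewrite (eq_bigr (fun m : 'I_(size a) =>
  - (if m == (size a).-1 :> nat then (sumn (take m a))%:R else 0))); last first.
  move=> m _; have ma := ltn_ord m; rewrite evalL_drop_V //.
  have -> : (m.+1 == size a) = (m == (size a).-1 :> nat) by apply/eqP/eqP; lia.
  by case: eqP => _ /=; rewrite ?mulr1n ?mulrN1 ?mulr0n ?oppr0 ?mulr0.
rewrite sumrN -big_mkcond (big_ord1_eq _ (fun m => (sumn (take m a))%:R)).
have -> : n = (sumn (take (size a).-1 a) + sumn (drop (size a).-1 a))%N.
  by rewrite -sumn_cat cat_take_drop.
by rewrite ltn_predL size_a_gt0 [LHS]/= natrD addKr.
Qed.

Lemma no_proper_factorization : False.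
Proof.
pose Q f := evalS n (slice f 0) W.
have W_at0 : map (horner_eval 0) W = U.
  rewrite geomS map_cons horner_evalE !hornerE -map_comp; congr (_ :: _).
  by rewrite -[RHS]map_id; apply: eq_map => w; rewrite /= horner_evalE hornerC.
have Q0 f : (Q f).[0] = evalS n (slice f 0) U.
  by rewrite -horner_evalE -evalS_map W_at0.
have QgQh : Q g * Q h = evalL a W.
  by rewrite /Q -!evalS_cons0 evalS_gh evalL_cons0.
have := coef1_evalL_W; rewrite -QgQh coefM big_ord_recr big_ord1 /= -!horner_coef0.
rewrite !Q0; have [-> ->] := evalS_slice0_U; rewrite mul0r mulr0 addr0.
move/esym/eqP; rewrite pnatr_eq0; apply/negP; rewrite -lt0n.
by rewrite sumn_gt0 ?composition_drop // drop_neq_nil // ltn_predL size_a_gt0.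
Qed.

End NoProperFactorization.

Lemma int_mul_eq1 (c x : int) : c * x = 1 -> c * c = 1.
Proof.
move=> cx; have : c \is a intUnitRing.unitz.
  by apply: (@intUnitRing.unitzPl c x); rewrite mulrC.
by rewrite qualifE => /orP[] /eqP->.
Qed.

Definition plus_minus_one (g : series) :=
  exists2 c : int, c * c = 1 & g =1 (fun s => c * oneS s).

Lemma mulS_scaled_oneS c g h s : g =1 (fun t => c * oneS t) -> mulS g h s = c * h s.
Proof.
elim: s g h => [|i s IH] g h gc; first by rewrite mulS_nil gc /oneS /= mulr1.
rewrite mulS_cons big_ord_recl subn0 (IH (slice g 0) (slice h i)) // => [|t].
  rewrite big1 ?addr0 // => j _; rewrite /mulS big1 // => t _.
  by rewrite /slice gc /oneS /= mulr0 mul0r.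
by rewrite /slice gc.
Qed.

Lemma plus_minus_one_unit (P : series -> Prop) g :
  P g -> plus_minus_one g -> unitIn P g.
Proof.
move=> Pg [c cc gc]; exists g; split=> // s.
by rewrite (mulS_scaled_oneS _ _ gc) gc mulrA cc mul1r.
Qed.

Lemma homogeneous0_scaled_oneS g : rcons0_inv g -> homogeneous 0 g ->
  g =1 (fun s => g [::] * oneS s).
Proof.
move=> gr g0 s; rewrite /oneS; case: eqP => [s0|/eqP s_neq0]; last first.
  by rewrite mulr0; apply/eqP; apply: contraNT s_neq0 => /g0 ->.
have -> : s = [::] ++ nseq (size s) 0%N.
  by elim: s s0 => //= x s IH /eqP; rewrite addn_eq0 => /andP[/eqP-> /eqP/IH <-].
by rewrite mulr1 rcons0_inv_pad.
Qed.

Lemma mulS_single g h n :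
  mulS g h [:: n] = \sum_(j < n.+1) g [:: nat_of_ord j] * h [:: n - j]%N.
Proof. by rewrite mulS_cons; apply: eq_bigr => j _; rewrite mulS_nil. Qed.

Lemma Lq_factor_plus_minus_one a g h : composition a -> a != [::] ->
  inK g -> inK h -> mulS g h =1 Lq a -> plus_minus_one g \/ plus_minus_one h.
Proof.
move=> ca a_neq0 gK hK gh; have n_gt0 := sumn_gt0 ca a_neq0.
have Lq_neq0 : exists s, Lq a s != 0 by exists [:: sumn a]; rewrite Lq_single ?oner_eq0.
have [d [e [de gd he]]] := homogeneous_factors gK hK gh (homogeneous_Lq ca) Lq_neq0.
have := gh [:: sumn a]; rewrite Lq_single // mulS_single.
case: d de gd => [|d] de gd.
  rewrite big_ord_recl big1 ?addr0 => [gh1|j _]; last first.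
    by rewrite (homogeneous0_scaled_oneS gK.1 gd) /oneS /= mulr0 mul0r.
  left; exists (g [::]); last exact: homogeneous0_scaled_oneS gK.1 gd.
  by apply: (@int_mul_eq1 _ (h [:: sumn a])); rewrite -gh1 -(gK.1 [::]) subn0.
case: e de he => [|e] de he.
  rewrite big_ord_recr /= big1 ?add0r => [gh1|j _]; last first.
    rewrite (homogeneous0_scaled_oneS hK.1 he) /oneS /=.
    by rewrite addn0 subn_eq0 leqNgt ltn_ord !mulr0.
  right; exists (h [::]); last exact: homogeneous0_scaled_oneS hK.1 he.
  by apply: (@int_mul_eq1 _ (g [:: sumn a])); rewrite mulrC -gh1 -(hK.1 [::]) subnn.
have [z z_prim] := C_prim_root_exists (ltn0Sn (sumn a)).
by case: (no_proper_factorization ca a_neq0 gd he de _ _ gh z_prim).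
Qed.

Lemma Lq_irredIn (P : series -> Prop) a : composition a -> a != [::] ->
  (forall f, P f -> inK f) -> P (Lq a) -> irredIn P (Lq a).
Proof.
move=> ca a_neq0 PK PL; split=> //.
- by exists [:: sumn a]; rewrite Lq_single ?oner_eq0 ?sumn_gt0.
- case=> u [_ /(_ [::])]; rewrite mulS_nil Lq_nil // mul0r /oneS /=.
  by move/eqP; rewrite eq_sym oner_eq0.
move=> g h Pg Ph gh.
by case: (Lq_factor_plus_minus_one ca a_neq0 (PK _ Pg) (PK _ Ph) gh) => ?;
  [left | right]; apply: plus_minus_one_unit.
Qed.

Theorem proposition8p11 (alpha : seq nat) :
  alpha != [::] -> composition alpha ->
  irredIn inQSym (Lq alpha) /\ irredIn inK (Lq alpha).
Proof.
move=> a_neq0 ca.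
have LK : inK (Lq alpha).
  split; first exact: rcons0_inv_Lq.
  by exists (sumn alpha); apply/homogeneous_deg_le/homogeneous_Lq.
have LQ : qsym (Lq alpha) by move=> s; rewrite /Lq /Mq /compress filter_id.
by split; apply: Lq_irredIn => // f [].
Qed.
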